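(* For $K=2$ users and $Q\ge1$ layers, with $\Pr[M\ge q]>0$ and $\mathbb{E}[N_u]>0$, the region $\mathcal{C}^{\rm in}$ equals the set of $(R_1,R_2)\in\mathbb{R}_+^2$ for which there exist $R_{u,q}\ge0$ with $R_u=\sum_{q=1}^QR_{u,q}$ such that $$\max_{q}\frac{R_{1,q}+R_{2,q}}{\Pr[M\ge q]}\le1\quad\text{and}\quad \frac{1}{\mathbb{E}[N_u]}\sum_{q=1}^Q\Big(R_{u,q}+R_{\bar u,q}\frac{\Pr[N_u\ge q]}{\Pr[M\ge q]}\Big)\le1\ \text{ for }(u,\bar u)\in\{(1,2),(2,1)\};$$ that is, $\mathcal{C}^{\rm in}$ has the same form as $\mathcal{S}^{\rm in}$ with arrival rates replaced by message rates (and strict inequalities replaced by non-strict ones).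
   Context: Channel: two-user LPE-BC with $Q$ layers; the state $(N_1,N_2)\in\{0,\dots,Q\}^2$ has an arbitrary joint law, $M:=\max(N_1,N_2)$, $[x]^+=\max(0,x)$. For nonnegative reals $k_{u,q}$ define $t^{\rm unc}_q=\frac{k_{1,q}+k_{2,q}}{\Pr[M\ge q]}$, $t^{\rm unc}=\max_q t^{\rm unc}_q$, $k^{\rm rem}_{u,q}=k_{u,q}(1-\frac{\Pr[N_u\ge q]}{\Pr[M\ge q]})$, $k^{\rm rem}_u=\big[\sum_{q=1}^Q(k^{\rm rem}_{u,q}-(t^{\rm unc}-t^{\rm unc}_q)\Pr[N_u\ge q])\big]^+$, $t^{\rm NC}=\max_u k^{\rm rem}_u/\mathbb{E}[N_u]$, and $\mathcal{C}^{\rm in}=\bigcup_{t>0,k_{u,q}\ge0}\{(R_1,R_2): t^{\rm unc}+t^{\rm NC}\le t,\ R_u=\frac1t\sum_q k_{u,q}\}$. $\mathcal{S}^{\rm in}$ is the set of $(\lambda_1,\lambda_2)\in\mathbb{R}^2_+$ for which there exist $\lambda_{u,q}\ge0$ with $\lambda_u=\sum_q\lambda_{u,q}$, $\frac{\lambda_{1,q}+\lambda_{2,q}}{\Pr[M\ge q]}<1$ for all $q$, and $\sum_q(\lambda_{u,q}+\lambda_{\bar u,q}\frac{\Pr[N_u\ge q]}{\Pr[M\ge q]})<\mathbb{E}[N_u]$ for $(u,\bar u)\in\{(1,2),(2,1)\}$. *)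

From HB Require Import structures.
From mathcomp Require Import all_boot all_order all_algebra.
Set Implicit Arguments. Unset Strict Implicit. Unset Printing Implicit Defensive.
Import Order.TTheory GRing.Theory Num.Theory.
Local Open Scope ring_scope.

Section LPE.
Variable R : realFieldType.
Variable Q : nat.
(* joint pmf of the channel state (N_1, N_2) in {0..Q}^2 *)
Variable p : {ffun 'I_Q.+1 * 'I_Q.+1 -> R}.

(* N_u of a state; user 1 is index 0, user 2 is index 1 *)
Definition Nst (u : 'I_2) (s : 'I_Q.+1 * 'I_Q.+1) : nat :=
  if u == ord0 then val s.1 else val s.2.

Definition is_pmf : Prop := (forall s, 0 <= p s) /\ \sum_s p s = 1.

Definition PrN (u : 'I_2) (q : nat) : R := \sum_(s | (q <= Nst u s)%N) p s.
Definition PrM (q : nat) : R :=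
  \sum_(s | (q <= maxn (val s.1) (val s.2))%N) p s.
Definition EN (u : 'I_2) : R := \sum_s p s * (Nst u s)%:R.

(* k u q = k_{u,q}, layers q = 1..Q *)
Definition tunc_q (k : 'I_2 -> nat -> R) (q : nat) : R :=
  (k ord0 q + k (@Ordinal 2 1 isT) q) / PrM q.
Definition tunc (k : 'I_2 -> nat -> R) : R :=
  \big[Num.max/0]_(1 <= q < Q.+1) tunc_q k q.
Definition krem_q (k : 'I_2 -> nat -> R) (u : 'I_2) (q : nat) : R :=
  k u q * (1 - PrN u q / PrM q).
Definition krem (k : 'I_2 -> nat -> R) (u : 'I_2) : R :=
  Num.max 0 (\sum_(1 <= q < Q.+1)
                (krem_q k u q - (tunc k - tunc_q k q) * PrN u q)).
Definition tNC (k : 'I_2 -> nat -> R) : R :=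
  Num.max (krem k ord0 / EN ord0)
          (krem k (@Ordinal 2 1 isT) / EN (@Ordinal 2 1 isT)).

Definition Cin (R1 R2 : R) : Prop :=
  exists t : R, 0 < t /\
  exists k : 'I_2 -> nat -> R, (forall u q, 0 <= k u q) /\
    tunc k + tNC k <= t /\
    R1 = t^-1 * \sum_(1 <= q < Q.+1) k ord0 q /\
    R2 = t^-1 * \sum_(1 <= q < Q.+1) k (@Ordinal 2 1 isT) q.

Definition Cform (R1 R2 : R) : Prop :=
  0 <= R1 /\ 0 <= R2 /\
  exists r : 'I_2 -> nat -> R, (forall u q, 0 <= r u q) /\
    R1 = \sum_(1 <= q < Q.+1) r ord0 q /\
    R2 = \sum_(1 <= q < Q.+1) r (@Ordinal 2 1 isT) q /\
    \big[Num.max/0]_(1 <= q < Q.+1)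
       ((r ord0 q + r (@Ordinal 2 1 isT) q) / PrM q) <= 1 /\
    (forall u ubar : 'I_2, u != ubar ->
       (EN u)^-1 * \sum_(1 <= q < Q.+1)
          (r u q + r ubar q * (PrN u q / PrM q)) <= 1).
End LPE.

From HB Require Import structures.
From mathcomp Require Import all_boot all_order all_algebra.
From mathcomp Require Import ring.
Set Implicit Arguments. Unset Strict Implicit. Unset Printing Implicit Defensive.
Import Order.TTheory GRing.Theory Num.Theory.
Local Open Scope ring_scope.

(* For rates k and a time budget t, the time t^unc + t^NC of the
   two-phase scheme is  max(t^unc, S_1(k)/E[N_1], S_2(k)/E[N_2]), where
   S_u(k) = sum_q (k_{u,q} + k_{ubar,q} Pr[N_u>=q]/Pr[M>=q])  is the "load" of
   user u.  This rests on the layer-cake formula E[N_u] = sum_q Pr[N_u>=q],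
   which turns the sum defining k^rem_u into S_u(k) - t^unc E[N_u].  Hence
   t^unc + t^NC <= t iff every per-layer time t^unc_q and every normalised
   load S_u/E[N_u] is at most t; call this "k is feasible in time t".
   Feasibility is homogeneous in (k, t), so a point of C^in (rates k/t in
   time t) is the same as rates r feasible in time 1, and feasibility in
   time 1 is literally the defining condition of the S^in-like region. *)

Lemma bigmax_nat_le (R : realDomainType) (m n : nat) (F : nat -> R) (c : R) :
  0 <= c ->
  \big[Num.max/0]_(m <= i < n) F i <= c <-> forall i, (m <= i < n)%N -> F i <= c.
Proof.
move=> c0; split=> [Hmax i Hi | HF].
- apply: le_trans Hmax; rewrite -mem_index_iota in Hi.
  elim: (index_iota m n) Hi => [|j r IH] //; rewrite in_cons big_cons le_max.
  by case/orP=> [/eqP ->|/IH ->]; rewrite ?lexx ?orbT.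
- rewrite big_nat_cond; apply: (big_ind (fun x => x <= c)) => //.
  + by move=> x y xc yc; rewrite ge_max xc yc.
  + by move=> i /andP[Hi _]; apply: HF.
Qed.

Lemma budget_max (R : realDomainType) (a x y c : R) : 0 <= a ->
  a + Num.max (Num.max 0 (x - a)) (Num.max 0 (y - a)) <= c <->
  [/\ a <= c, x <= c & y <= c].
Proof.
move=> a0; rewrite -lerBrDl !ge_max !lerBlDl subr_ge0 addrC subrK.
by split=> [/and3P[/andP[-> ->] _ ->] | [-> -> ->]].
Qed.

Lemma sum_layers_below (R : numDomainType) (Q n : nat) : (n <= Q)%N ->
  \sum_(1 <= q < Q.+1) (((q <= n)%N)%:R : R) = n%:R.
Proof.
move=> nQ; rewrite (@big_cat_nat _ _ _ n.+1) //=.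
rewrite [X in _ + X]big_nat_cond [X in _ + X]big1; last first.
  by move=> q /andP[/andP[Hq _] _]; rewrite leqNgt Hq.
rewrite addr0 big_nat_cond (eq_bigr (fun _ => 1)); last first.
  by move=> q /andP[/andP[_ Hq] _]; rewrite -ltnS Hq.
by rewrite -big_nat_cond sumr_const_nat subn1.
Qed.

Notation u2 := (@Ordinal 2 1 isT).

Lemma ord2_pairs (P : 'I_2 -> 'I_2 -> Prop) :
  (forall u ub : 'I_2, u != ub -> P u ub) <-> P ord0 u2 /\ P u2 ord0.
Proof.
split=> [HP | [P01 P10] [[|[|m]] Hu] [[|[|n]] Hn] //]; first by split; apply: HP.
- by rewrite (bool_irrelevance Hu (ltn0Sn 1)) (bool_irrelevance Hn isT).
- by rewrite (bool_irrelevance Hu isT) (bool_irrelevance Hn (ltn0Sn 1)).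
Qed.

Section Feasibility.
Variables (R : realFieldType) (Q : nat) (p : {ffun 'I_Q.+1 * 'I_Q.+1 -> R}).

Lemma EN_layer_cake (u : 'I_2) : EN p u = \sum_(1 <= q < Q.+1) PrN p u q.
Proof.
have NQ (s : 'I_Q.+1 * 'I_Q.+1) : (Nst u s <= Q)%N.
  by rewrite /Nst -ltnS; case: ifP => _; apply: ltn_ord.
transitivity (\sum_s \sum_(1 <= q < Q.+1) p s * ((q <= Nst u s)%N)%:R).
  by apply: eq_bigr => s _; rewrite -mulr_sumr sum_layers_below.
rewrite (exchange_big_dep xpredT) //=; apply: eq_bigr => q _.
rewrite /PrN [RHS]big_mkcond; apply: eq_bigr => s _.
by case: ifP; rewrite ?mulr1 ?mulr0.
Qed.

(* The load of user [u] when the other user is [ub]: the left-hand side of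
   the per-user constraint of S^in. *)
Definition load (k : 'I_2 -> nat -> R) (u ub : 'I_2) : R :=
  \sum_(1 <= q < Q.+1) (k u q + k ub q * (PrN p u q / PrM p q)).

Definition feasible (k : 'I_2 -> nat -> R) (t : R) : Prop :=
  (forall q, (1 <= q < Q.+1)%N -> tunc_q p k q <= t) /\
  (forall u ub : 'I_2, u != ub -> load k u ub <= t * EN p u).

Lemma krem_sum_load (k : 'I_2 -> nat -> R) (u ub : 'I_2) :
  (forall q, k ord0 q + k u2 q = k u q + k ub q) ->
  \sum_(1 <= q < Q.+1) (krem_q p k u q - (tunc p k - tunc_q p k q) * PrN p u q)
  = load k u ub - tunc p k * EN p u.
Proof.
move=> Hpair; rewrite EN_layer_cake mulr_sumr -sumrB.
by apply: eq_bigr => q _; rewrite /krem_q /tunc_q Hpair; ring.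
Qed.

Lemma tunc_ge0 (k : 'I_2 -> nat -> R) : 0 <= tunc p k.
Proof.
rewrite /tunc; elim: (index_iota 1 Q.+1) => [|q r IH]; first by rewrite big_nil.
by rewrite big_cons le_max IH orbT.
Qed.

Hypothesis EN_pos : forall u, 0 < EN p u.

Lemma krem_normalised (k : 'I_2 -> nat -> R) (u ub : 'I_2) :
  (forall q, k ord0 q + k u2 q = k u q + k ub q) ->
  krem p k u / EN p u = Num.max 0 (load k u ub / EN p u - tunc p k).
Proof.
move=> Hpair; have E0 := EN_pos u.
rewrite /krem (krem_sum_load Hpair) maxr_pMl ?invr_ge0 ?ltW // mul0r.
by congr Num.max; field; rewrite gt_eqF.
Qed.

Lemma scheme_time_le (k : 'I_2 -> nat -> R) (t : R) :
  0 <= t -> tunc p k + tNC p k <= t <-> feasible k t.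
Proof.
move=> t0; rewrite /tNC (@krem_normalised k ord0 u2) //.
rewrite (@krem_normalised k u2 ord0) => [|q]; last exact: addrC.
rewrite budget_max ?tunc_ge0 // /feasible ord2_pairs.
rewrite ![_ / EN p _ <= t]ler_pdivrMr // /tunc.
have unc_le := bigmax_nat_le 1 Q.+1 (tunc_q p k) t0.
by split=> [[/unc_le ? ? ?] | [/unc_le ? [? ?]]]; do ?split.
Qed.

Lemma feasible_scale (k : 'I_2 -> nat -> R) (t c : R) : 0 <= c ->
  feasible k t -> feasible (fun u q => c * k u q) (c * t).
Proof.
move=> c0 [Hunc Hload]; split=> [q Hq | u ub Hne].
- rewrite /tunc_q -mulrDr -mulrA; exact: ler_wpM2l (Hunc q Hq).
- rewrite /load (eq_bigr (fun q => c * (k u q + k ub q * (PrN p u q / PrM p q)))).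
    by rewrite -mulr_sumr -mulrA; apply: ler_wpM2l (Hload u ub Hne).
  by move=> q _; ring.
Qed.

Lemma feasible_unit (r : 'I_2 -> nat -> R) :
  feasible r 1 <->
  \big[Num.max/0]_(1 <= q < Q.+1) ((r ord0 q + r u2 q) / PrM p q) <= 1 /\
  (forall u ub : 'I_2, u != ub -> (EN p u)^-1 * load r u ub <= 1).
Proof.
have Hload u ub : ((EN p u)^-1 * load r u ub <= 1) = (load r u ub <= 1 * EN p u).
  by rewrite mulrC ler_pdivrMr.
rewrite bigmax_nat_le //; split=> [[Hq Hl] | [Hq Hl]]; split=> // u ub Hne.
- by rewrite Hload Hl.
- by rewrite -Hload Hl.
Qed.

End Feasibility.

Theorem lemma3 (R : realFieldType) (Q : nat)
  (p : {ffun 'I_Q.+1 * 'I_Q.+1 -> R}) :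
  (1 <= Q)%N ->
  is_pmf p ->
  (forall q : nat, (1 <= q <= Q)%N -> 0 < PrM p q) ->
  (forall u : 'I_2, 0 < EN p u) ->
  forall R1 R2 : R, Cin p R1 R2 <-> Cform p R1 R2.
Proof.
move=> _ _ _ EN_pos R1 R2; split.
- case=> t [t0 [k [k0 [Htime [-> ->]]]]].
  have ti0 : 0 <= t^-1 by rewrite invr_ge0 ltW.
  have Hfeas : feasible p (fun u q => t^-1 * k u q) 1.
    rewrite -(mulVf (lt0r_neq0 t0)); apply: feasible_scale => //.
    by rewrite -scheme_time_le // ltW.
  split; first by apply: mulr_ge0 => //; apply: sumr_ge0.
  split; first by apply: mulr_ge0 => //; apply: sumr_ge0.
  exists (fun u q => t^-1 * k u q); split; first by move=> u q; apply: mulr_ge0.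
  by rewrite !mulr_sumr -feasible_unit.
- case=> _ [_ [r [r0 [-> [-> Hunit]]]]].
  exists 1; split=> //; exists r; split=> //.
  rewrite invr1 !mul1r scheme_time_le //; split=> //.
  exact/feasible_unit.
Qed.
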